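(* Let $G=DS(L,P^{core},R)$ be a double spider and let $P$ be a path of length one belonging to $L\cup R$. Suppose at least one of the following holds: (1) $P\in R$, $\deg_G(v_l)\ge\deg_G(v_r)>3$, and the double spider $DS(L,P^{core},R\setminus\{P\})$ (i.e. $G$ with the edge of $P$ and its leaf removed) is strongly antimagic; (2) $P\in L$, $\deg_G(v_l)>\deg_G(v_r)\ge 3$, and the double spider $DS(L\setminus\{P\},P^{core},R)$ has a strongly antimagic labeling $f$ with $\varphi_f(v_l)>\varphi_f(v_r)$. Then $G$ is strongly antimagic.
   Context: For a graph $G=(V,E)$ and a bijection $f:E\to\{1,\dots,|E|\}$, $\varphi_f(u)=\sum_{e\ni u}f(e)$; $f$ is strongly antimagic if the $\varphi_f(u)$ are pairwise distinct over $V$ and $\deg(u)<\deg(v)$ implies $\varphi_f(u)<\varphi_f(v)$; a graph is strongly antimagic if it has such a labeling. A double spider is a tree with exactly two vertices of degree at least $3$, denoted $v_l$ and $v_r$, with the convention $\deg(v_l)\ge\deg(v_r)$. Its edge set is decomposed as $P^{core}\cup L\cup R$, where $P^{core}$ is the unique $v_l$–$v_r$ path, $L$ is the set of maximal paths having $v_l$ as an endpoint and edge-disjoint from $P^{core}$ (each ending at a leaf), and $R$ is the analogous set of paths at $v_r$. The double spider is written $DS(L,P^{core},R)$; the length of a path is its number of edges. *)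

(* A graph is given by a vertex set S : {set V} inside a
   finType V and an adjacency relation e (assumed symmetric, irreflexive);
   the graph is the one induced on S. Edges are 2-element sets {u,v}. *)
From mathcomp Require Import all_boot.
Set Implicit Arguments. Unset Strict Implicit. Unset Printing Implicit Defensive.

Section Graphs.
Variable V : finType.

Definition adjS (S : {set V}) (e : rel V) : rel V :=
  [rel a b | [&& a \in S, b \in S & e a b]].

Definition edges (S : {set V}) (e : rel V) : {set {set V}} :=
  [set [set x; y] | x in S, y in S & e x y].

Definition deg (S : {set V}) (e : rel V) (v : V) : nat :=
  #|[set u in S | e v u]|.

Definition connectedG (S : {set V}) (e : rel V) : Prop :=
  forall x y, x \in S -> y \in S -> connect (adjS S e) x y.

Definition acyclicG (S : {set V}) (e : rel V) : Prop :=
  ~ exists c : seq V, (3 <= size c) && ucycleb (adjS S e) c.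

Definition is_tree (S : {set V}) (e : rel V) : Prop :=
  S != set0 /\ connectedG S e /\ acyclicG S e.

Definition double_spider (S : {set V}) (e : rel V) (vl vr : V) : Prop :=
  [/\ is_tree S e, vl != vr,
      [set v in S | 3 <= deg S e v] = [set vl; vr]
    & deg S e vr <= deg S e vl].

Definition edge_bij (S : {set V}) (e : rel V) (f : {set V} -> nat) : Prop :=
  {in edges S e &, injective f} /\
  (forall x, x \in edges S e -> 1 <= f x <= #|edges S e|).

Definition phi (S : {set V}) (e : rel V) (f : {set V} -> nat) (v : V) : nat :=
  \sum_(u in S | e v u) f [set v; u].

Definition strongly_antimagic_labeling (S : {set V}) (e : rel V)
    (f : {set V} -> nat) : Prop :=
  [/\ edge_bij S e f,
      {in S &, injective (phi S e f)}
    & forall u v, u \in S -> v \in S -> deg S e u < deg S e v ->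
        phi S e f u < phi S e f v].

Definition strongly_antimagic (S : {set V}) (e : rel V) : Prop :=
  exists f, strongly_antimagic_labeling S e f.

End Graphs.

(* Given a labeling f' of G - w, label
   the edge vw by 1 and shift every other label up by 1.  Then the leaf gets
   weight 1 and every other vertex y gets weight phi_f'(y) + deg_G(y), so
   distinctness and monotonicity in G reduce to monotonicity of phi_f' with
   respect to the degrees in G.  These agree with the degrees in G - w except
   at v, and the only vertex that can be overtaken by v when v regains its
   edge is the other hub: this is excluded by deg v_r > 3 in case (1) and is
   the hypothesis phi_f(v_l) > phi_f(v_r) in case (2). *)
From mathcomp Require Import all_boot zify.
Set Implicit Arguments. Unset Strict Implicit. Unset Printing Implicit Defensive.

Lemma mem_setD1 (T : finType) (A : {set T}) x b : x \in A -> x != b -> x \in A :\ b.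
Proof. by move=> xA xb; apply/setD1P. Qed.

Lemma edgesP (V : finType) (S : {set V}) (e : rel V) E :
  reflect (exists x y, [/\ x \in S, y \in S, e x y & E = [set x; y]])
          (E \in edges S e).
Proof.
apply: (iffP imset2P).
  by case=> x y xS; rewrite inE => /andP[yS exy] ->; exists x, y.
by case=> x [y [xS yS exy ->]]; apply: (Imset2spec xS) => //; rewrite inE yS.
Qed.

Lemma edge_setD1_notin (V : finType) (S : {set V}) (e : rel V) x w :
  [set x; w] \notin edges (S :\ w) e.
Proof.
apply/edgesP => -[a [b [aS bS _ hab]]].
have : w \in [set a; b] by rewrite -hab !inE eqxx orbT.
by rewrite !inE => /orP[] /eqP wE; [move: aS | move: bS]; rewrite -wE setD11.
Qed.

Lemma deg_setD1 (V : finType) (S : {set V}) (e : rel V) w y :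
  w \in S -> deg S e y = e y w + deg (S :\ w) e y.
Proof.
move=> wS; rewrite /deg (cardsD1 w) inE wS /=; congr (_ + _); apply: eq_card => u.
by rewrite !inE andbA.
Qed.

Lemma phi_setD1 (V : finType) (S : {set V}) (e : rel V) f w y :
  w \in S ->
  phi S e f y = (if e y w then f [set y; w] else 0) + phi (S :\ w) e f y.
Proof.
move=> wS; rewrite /phi (bigID (pred1 w)) /=; congr (_ + _).
  case: ifP => eyw.
    by rewrite (big_pred1 w) // => u /=; case: eqP => [->|]; rewrite ?wS ?eyw ?andbF.
  by rewrite big_pred0 // => u /=; case: eqP => [->|]; rewrite ?eyw ?andbF.
by apply: eq_bigl => u; rewrite !inE andbC andbA.
Qed.

Lemma deg_le_phi (V : finType) (S : {set V}) (e : rel V) f y :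
  edge_bij S e f -> y \in S -> deg S e y <= phi S e f y.
Proof.
case=> _ f_range yS; rewrite /deg /phi -sum1_card.
rewrite (eq_bigl (fun u => (u \in S) && e y u)) => [|u]; last by rewrite inE.
apply: leq_sum => u /andP[uS eyu].
have /f_range/andP[] // : [set y; u] \in edges S e by apply/edgesP; exists y, u.
Qed.

Lemma phi_deg0 (V : finType) (S : {set V}) (e : rel V) f y :
  deg S e y = 0 -> phi S e f y = 0.
Proof.
move/eqP; rewrite cards_eq0 => /eqP nbr0.
by rewrite /phi big_pred0 // => u; have := in_set0 u; rewrite -nbr0 inE.
Qed.

Section LeafExtension.

Variables (V : finType) (S : {set V}) (e : rel V) (v w : V).
Hypothesis e_sym : symmetric e.
Hypotheses (vS : v \in S) (wS : w \in S) (evw : e v w) (w_leaf : deg S e w = 1).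

Lemma leaf_nbrE y : y \in S -> e y w = (y == v).
Proof.
move=> yS; apply/idP/eqP => [eyw|->] //.
have [z nbr_w] := cards1P (introT eqP w_leaf).
have : y \in [set u in S | e w u] by rewrite inE yS e_sym.
have : v \in [set u in S | e w u] by rewrite inE vS e_sym.
by rewrite nbr_w !inE => /eqP -> /eqP ->.
Qed.

Lemma deg_leafE y : y \in S -> deg S e y = (y == v) + deg (S :\ w) e y.
Proof. by move=> yS; rewrite (deg_setD1 _ _ wS) leaf_nbrE. Qed.

Lemma edges_leaf : edges S e = [set v; w] |: edges (S :\ w) e.
Proof.
apply/setP=> E; rewrite !inE; apply/idP/idP.
  case/edgesP=> x [y [xS yS exy ->]].
  have [xw | xw] := eqVneq x w.
    by subst x; move: (leaf_nbrE yS); rewrite e_sym exy => /esym/eqP ->; rewrite setUC eqxx.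
  have [yw | yw] := eqVneq y w.
    by subst y; move: (leaf_nbrE xS); rewrite exy => /esym/eqP ->; rewrite eqxx.
  by apply/orP; right; apply/edgesP; exists x, y; rewrite !inE xw yw xS yS.
case/orP=> [/eqP -> | /edgesP[x [y [xS yS exy ->]]]]; apply/edgesP.
  by exists v, w.
by exists x, y; split=> //; [move: xS | move: yS]; rewrite inE => /andP[].
Qed.

Definition shift_label (f' : {set V} -> nat) (E : {set V}) : nat :=
  if E == [set v; w] then 1 else (f' E).+1.

Lemma shift_label_setD1 f' E :
  E \in edges (S :\ w) e -> shift_label f' E = (f' E).+1.
Proof.
by move=> EG; rewrite /shift_label ifF //; apply: contraNF (edge_setD1_notin S e v w) => /eqP <-.
Qed.

Lemma edge_bij_shift f' : edge_bij (S :\ w) e f' -> edge_bij S e (shift_label f').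
Proof.
case=> f'_inj f'_range; rewrite /edge_bij edges_leaf.
have vw_new := edge_setD1_notin S e v w.
split=> [E1 E2 | E]; rewrite !inE.
  have shift1 : {in edges (S :\ w) e, forall E, shift_label f' E != 1}.
    by move=> E EG; rewrite shift_label_setD1 //; have /andP[] := f'_range _ EG; case: (f' E).
  case/orP=> [/eqP -> | E1G]; case/orP=> [/eqP -> | E2G] //.
  - by rewrite {1}/shift_label eqxx => /esym/eqP; rewrite (negbTE (shift1 _ E2G)).
  - by rewrite {2}/shift_label eqxx => /eqP; rewrite (negbTE (shift1 _ E1G)).
  by rewrite !shift_label_setD1 // => -[/f'_inj]; apply.
rewrite cardsU1 vw_new.
case/orP=> [/eqP -> | EG]; first by rewrite /shift_label eqxx.
by rewrite shift_label_setD1 //; have := f'_range _ EG; lia.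
Qed.

Lemma phi_shift_leaf f' : phi S e (shift_label f') w = 1.
Proof.
rewrite /phi (eq_bigl (pred1 v)) ?big_pred1_eq; first by rewrite /shift_label setUC eqxx.
move=> u /=; apply/andP/eqP => [[uS ewu] | ->]; last by rewrite vS e_sym.
by apply/eqP; rewrite -leaf_nbrE // e_sym.
Qed.

Lemma phi_shift f' y : y \in S :\ w ->
  phi S e (shift_label f') y = phi (S :\ w) e f' y + deg S e y.
Proof.
rewrite inE => /andP[yw yS].
rewrite (phi_setD1 _ _ _ wS) (deg_setD1 _ _ wS) leaf_nbrE //.
have -> : phi (S :\ w) e (shift_label f') y = phi (S :\ w) e f' y + deg (S :\ w) e y.
  rewrite /phi /deg -sum1_card.
  rewrite [X in _ + X](eq_bigl (fun u => (u \in S :\ w) && e y u)) => [|u]; last by rewrite inE.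
  rewrite -big_split /=.
  apply: eq_bigr => u /andP[uS eyu]; rewrite shift_label_setD1 ?addn1 //.
  by apply/edgesP; exists y, u; rewrite inE yw yS.
by case: eqP => [-> | _]; rewrite /shift_label ?eqxx /=; lia.
Qed.

Lemma mono_setD1_leaf f' : strongly_antimagic_labeling (S :\ w) e f' ->
  (forall u, u \in S :\ w -> (deg S e u).+1 = deg S e v ->
     phi (S :\ w) e f' u < phi (S :\ w) e f' v) ->
  {in S :\ w &, forall u x,
     deg S e u < deg S e x -> phi (S :\ w) e f' u < phi (S :\ w) e f' x}.
Proof.
case=> _ _ mono_f' below_v u x uSw xSw.
have [uS xS] : u \in S /\ x \in S by move: uSw xSw; rewrite !in_setD1 => /andP[_ ->] /andP[_ ->].
rewrite !deg_leafE //.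
have [xv | xv] := eqVneq x v; last first.
  by case: eqVneq => _ deg_ux; apply: mono_f' => //; lia.
have [uv | uv] := eqVneq u v; first by rewrite uv xv ltnn.
rewrite add1n ltnS leq_eqVlt => /orP[/eqP deg_ux | ]; last exact: mono_f'.
by rewrite xv below_v // !deg_leafE // (negbTE uv) eqxx deg_ux xv.
Qed.

Section ShiftedLabeling.

Variable f' : {set V} -> nat.
Hypothesis mono_f' : {in S :\ w &, forall u x,
  deg S e u < deg S e x -> phi (S :\ w) e f' u < phi (S :\ w) e f' x}.

Let f := shift_label f'.

Lemma phi_shift_mono u x : u \in S -> x \in S ->
  deg S e u < deg S e x -> phi S e f u < phi S e f x.
Proof.
move=> uS xS deg_ux.
have [uw | uw] := eqVneq u w.
  have xw : x != w by apply: contraTneq deg_ux => ->; rewrite uw ltnn.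
  by rewrite uw phi_shift_leaf phi_shift ?mem_setD1 //; move: deg_ux; rewrite uw w_leaf; lia.
have [xw | xw] := eqVneq x w.
  move: deg_ux; rewrite xw w_leaf ltnS leqn0 => /eqP deg_u0.
  rewrite phi_shift_leaf phi_shift ?mem_setD1 // deg_u0 phi_deg0 //.
  by move: deg_u0; rewrite (deg_setD1 _ _ wS); lia.
rewrite !phi_shift ?mem_setD1 //.
by have := mono_f' (mem_setD1 uS uw) (mem_setD1 xS xw) deg_ux; lia.
Qed.

Lemma phi_shift_inj : 1 < deg S e v -> strongly_antimagic_labeling (S :\ w) e f' ->
  {in S &, injective (phi S e f)}.
Proof.
move=> deg_v [f'_bij f'_inj _] u x uS xS phi_ux.
have [deg_ux | deg_xu | deg_ux] := ltngtP (deg S e u) (deg S e x).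
- by have := phi_shift_mono uS xS deg_ux; rewrite phi_ux ltnn.
- by have := phi_shift_mono xS uS deg_xu; rewrite phi_ux ltnn.
have leaf_phi y : y \in S -> y != w -> deg S e y = 1 -> phi S e f y != 1.
  move=> yS yw deg_y; rewrite phi_shift ?mem_setD1 // deg_y.
  have yv : y != v by apply: contra_eqN deg_y => /eqP ->; rewrite neq_ltn deg_v orbT.
  have := deg_le_phi f'_bij (mem_setD1 yS yw).
  by move: deg_y; rewrite deg_leafE // (negbTE yv); lia.
have [uw | uw] := eqVneq u w; have [xw | xw] := eqVneq x w.
- by rewrite uw xw.
- have := leaf_phi _ xS xw; rewrite -deg_ux -phi_ux uw w_leaf phi_shift_leaf.
  by move=> /(_ erefl); rewrite eqxx.
- have := leaf_phi _ uS uw; rewrite deg_ux phi_ux xw w_leaf phi_shift_leaf.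
  by move=> /(_ erefl); rewrite eqxx.
apply: f'_inj; rewrite ?mem_setD1 //.
by move: phi_ux; rewrite !phi_shift ?mem_setD1 // deg_ux => /addIn.
Qed.

Lemma shift_strongly_antimagic : 1 < deg S e v ->
  strongly_antimagic_labeling (S :\ w) e f' -> strongly_antimagic_labeling S e f.
Proof.
move=> deg_v f'_sa; split; last exact: phi_shift_mono.
  by case: f'_sa => f'_bij _ _; exact: edge_bij_shift.
exact: phi_shift_inj.
Qed.

End ShiftedLabeling.

End LeafExtension.

Lemma double_spider_hubE (V : finType) (S : {set V}) (e : rel V) vl vr y :
  double_spider S e vl vr -> (y \in S) && (3 <= deg S e y) = (y == vl) || (y == vr).
Proof. by case=> _ _ /setP/(_ y); rewrite !inE. Qed.

Theorem lemma3 (V : finType) (e : rel V) (S : {set V}) (vl vr w : V)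
  (e_sym : symmetric e) (e_irr : irreflexive e)
  (hDS : double_spider S e vl vr)
  (hw : w \in S) (hleaf : deg S e w = 1) :
  ((e vr w /\ deg S e vl >= deg S e vr /\ deg S e vr > 3 /\
     strongly_antimagic (S :\ w) e)
   \/
   (e vl w /\ deg S e vl > deg S e vr /\ deg S e vr >= 3 /\
     exists f, strongly_antimagic_labeling (S :\ w) e f /\
               phi (S :\ w) e f vl > phi (S :\ w) e f vr)) ->
  strongly_antimagic S e.
Proof.
have vlS : vl \in S by have := double_spider_hubE vl hDS; rewrite eqxx => /andP[].
have vrS : vr \in S by have := double_spider_hubE vr hDS; rewrite eqxx orbT => /andP[].
have hub u : u \in S :\ w -> 3 <= deg S e u -> u = vl \/ u = vr.
  rewrite in_setD1 => /andP[_ uS] deg_u.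
  by have := double_spider_hubE u hDS; rewrite uS deg_u /= => /esym/orP[]/eqP; [left | right].
have [_ _ _ deg_vlr] := hDS.
case=> [[evw [_ [deg_vr [f' f'_sa]]]] | [evw [deg_vlr' [deg_vr [f' [f'_sa phi_vlr]]]]]].
  exists (shift_label vr w f').
  apply: shift_strongly_antimagic => //; last by lia.
  apply: (mono_setD1_leaf e_sym vrS hw evw hleaf f'_sa) => u uSw deg_u.
  have deg_u3 : 2 < deg S e u by lia.
  by case: (hub u uSw deg_u3) deg_u => ->; lia.
exists (shift_label vl w f').
apply: shift_strongly_antimagic => //; last by lia.
apply: (mono_setD1_leaf e_sym vlS hw evw hleaf f'_sa) => u uSw deg_u.
have deg_u3 : 2 < deg S e u by lia.
by case: (hub u uSw deg_u3) deg_u => ->; lia.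
Qed.
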